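(* Let $A$, $Q$ and $H\subseteq A^Q$ be non-empty finite sets, $n\ge3$ a natural number, and $\mathcal F$ a clone with carrier $A$ satisfying $\Delta^s_n$. Then $H\in\mathrm{Inv}_Q\mathcal F$ if and only if both of the following hold: (1) $H|_P\in\mathrm{Inv}_P\mathcal F$ for all $P\in[Q]^1\cup[Q]^{2,0}_H\cup\{Q^{(n)}_H\}$; (2) $H$ is decomposable over $[Q]^1\cup[Q]^{2,0}_H\cup\{Q^{(n)}_H\}$.
   Context: $\mathcal O(A)=\bigcup_{n<\omega}A^{A^n}$; $\mathcal F_{[n]}=\mathcal F\cap A^{A^n}$. Elements of $A^n$ are sequences $\mathbf x=x_0\dots x_{n-1}$; $\mathrm{ran}\,\mathbf x$ is the set of entries; $A^n_k=\{\mathbf x:|\mathrm{ran}\,\mathbf x|=k\}$, $A^n_{<n}=\bigcup_{k<n}A^n_k$. A clone with carrier $A$ is a subset of $\mathcal O(A)$ containing all projections and closed under composition. For $f\in\mathcal O(A)_{[m]}$ and $h_i\in A^Q$, $f(h_0,\dots,h_{m-1})$ is $q\mapsto f(h_0(q)\dots h_{m-1}(q))$; $\mathrm{Inv}_Q\mathcal F$ is the set of $H\subseteq A^Q$ closed under all such compositions with $f\in\mathcal F$. $h|_P$ is the restriction of $h$ to $P\cap\mathrm{dom}\,h$, $H|_P=\{h|_P:h\in H\}$, $H(q)=\{h(q):h\in H\}$. For $R\subseteq Q$, $(H|_R)|^Q=\{f\in A^Q:f|_R\in H|_R\}$; $H$ is decomposable over $\mathscr R\subseteq\mathscr P(Q)$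 if $H=\bigcap_{R\in\mathscr R}(H|_R)|^Q$. $[Q]^k$ is the set of $k$-element subsets of $Q$; $S_A$ the set of permutations of $A$. $[Q]^{2,0}_H$ is the set of $\{p,q\}\in[Q]^2$ for which there is $\sigma\in S_A$ with $h(q)=\sigma(h(p))$ for all $h\in H$. $Q^{(n)}_H=\{q\in Q:|H(q)|<n\}$. $\mathcal F$ satisfies $\Delta^s_n$ if there is $i<n$ such that for every $\mathbf a\in A^n_n$ and every $a\in\mathrm{ran}\,\mathbf a$ there is $s\in\mathcal F_{[n]}$ with $s(\mathbf a)=a$ and $s(\mathbf x)=x_i$ for all $\mathbf x=x_0\dots x_{n-1}\in A^n_{<n}$. *)

From HB Require Import structures.
From mathcomp Require Import all_boot all_fingroup.
Set Implicit Arguments. Unset Strict Implicit. Unset Printing Implicit Defensive.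

Definition op (A : finType) (m : nat) := {ffun {ffun 'I_m -> A} -> A}.

Definition opfam (A : finType) := forall m : nat, {set op A m}.

Definition is_clone (A : finType) (F : opfam A) : Prop :=
  (forall m (i : 'I_m), [ffun x : {ffun 'I_m -> A} => x i] \in F m) /\
  (forall m k (f : op A m) (g : 'I_m -> op A k),
      f \in F m -> (forall i, g i \in F k) ->
      [ffun x : {ffun 'I_k -> A} => f [ffun i => g i x]] \in F k).

Definition ran (A : finType) (n : nat) (x : {ffun 'I_n -> A}) : {set A} :=
  [set x i | i : 'I_n].

Definition Delta_s (A : finType) (F : opfam A) (n : nat) : Prop :=
  exists i : 'I_n,
    forall a : {ffun 'I_n -> A}, #|ran a| = n ->
    forall b, b \in ran a ->
      exists2 s : op A n, s \in F n &
        s a = b /\ (forall x : {ffun 'I_n -> A}, #|ran x| < n -> s x = x i).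

Definition Inv (A P : finType) (F : opfam A) (H : {set {ffun P -> A}}) : Prop :=
  forall m (f : op A m) (h : 'I_m -> {ffun P -> A}),
    f \in F m -> (forall i, h i \in H) ->
    [ffun q : P => f [ffun i => h i q]] \in H.

Definition restr (A Q : finType) (R : {set Q}) (h : {ffun Q -> A})
  : {ffun {q : Q | q \in R} -> A} :=
  [ffun q => h (val q)].

Definition restr_set (A Q : finType) (R : {set Q}) (H : {set {ffun Q -> A}})
  : {set {ffun {q : Q | q \in R} -> A}} :=
  [set restr R h | h in H].

(* H is decomposable over RR:  H = \bigcap_{R in RR} (H|_R)|^Q *)
Definition decomposable (A Q : finType) (H : {set {ffun Q -> A}})
  (RR : {set {set Q}}) : Prop :=
  forall f : {ffun Q -> A},
    f \in H <-> (forall R, R \in RR -> restr R f \in restr_set R H).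

Definition sing_subsets (Q : finType) : {set {set Q}} :=
  [set P : {set Q} | #|P| == 1].

Definition pairs20 (A Q : finType) (H : {set {ffun Q -> A}}) : {set {set Q}} :=
  [set P | [exists p : Q, exists q : Q,
     [&& p != q, P == [set p; q] :> {set Q} &
        [exists s : {perm A}, [forall h : {ffun Q -> A}, (h \in H) ==> (h q == s (h p))]]]]].

Definition Qn (A Q : finType) (H : {set {ffun Q -> A}}) (n : nat) : {set Q} :=
  [set q : Q | #|[set h q | h : {ffun Q -> A} in H]| < n].

Definition decomp_family (A Q : finType) (H : {set {ffun Q -> A}}) (n : nat)
  : {set {set Q}} :=
  sing_subsets Q :|: pairs20 H :|: [set Qn H n].

From HB Require Import structures.
From mathcomp Require Import all_boot all_fingroup.
Set Implicit Arguments. Unset Strict Implicit. Unset Printing Implicit Defensive.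

(* Take n members of H with pairwise distinct values at a coordinate q but
   with a repeated value at every coordinate of a set S.  An operation of Delta^s_n
   applied to them acts as the i-th projection on S, while at q it can output
   any of the n values.  With three members this lets us change a member of H
   at q while keeping it fixed on S, as long as every coordinate of S either
   carries fewer than n values or is not linked to q.  Interpolating along one
   representative of each linked class then realizes any f whose restrictions
   to Q^(n)_H and to the singletons come from H; the remaining coordinates are
   images of their representative under a permutation, witnessed by a pair in
   [Q]^{2,0}_H.  Invariance of H under F passes to restrictions and back along
   decompositions directly. *)

Lemma card_ran_inj (A : finType) n (x : {ffun 'I_n -> A}) :
  injective x -> #|ran x| = n.
Proof. by move=> /card_imset ->; rewrite card_ord. Qed.

Lemma card_ran_lt (A : finType) n (x : {ffun 'I_n -> A}) j k :
  j != k -> x j = x k -> #|ran x| < n.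
Proof.
move=> jk xjk; rewrite ltn_neqAle -{2 4}(card_ord n) leq_imset_card andbT.
by apply: contra jk => /imset_injP inj; apply/eqP/inj.
Qed.

Lemma exists_avoid2 (T : finType) (V : {set T}) a b :
  2 < #|V| -> exists2 e, e \in V & (e != a) && (e != b).
Proof.
move=> V3; have /set0Pn[e] : V :\: [set a; b] != set0.
  rewrite -card_gt0 cardsD subn_gt0 (leq_ltn_trans _ V3) //.
  by rewrite (leq_trans (subset_leq_card (subsetIr _ _))) // cards2; case: (a == b).
by rewrite !inE negb_or => /andP[ab eV]; exists e.
Qed.

Lemma extend_inj (I T : finType) (V : {set T}) (D : {set I}) (b : I -> T) :
  #|I| <= #|V| -> {in D &, injective b} -> {in D, forall j, b j \in V} ->
  exists a : I -> T, [/\ injective a, forall j, a j \in V & {in D, a =1 b}].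
Proof.
move=> IV; move Dk: #|~: D| => k; elim: k D b Dk => [|k IH] D b Dk binj bV.
  have DT j : j \in D by move/eqP: Dk; rewrite cards_eq0 => /eqP/setP/(_ j); rewrite !inE => /negbFE.
  by exists b; split=> // [x y|j]; [apply: binj; exact: DT | apply: bV].
have /set0Pn[j0] : ~: D != set0 by rewrite -card_gt0 Dk.
rewrite inE => j0D.
have /set0Pn[v0] : V :\: b @: D != set0.
  rewrite -card_gt0 cardsD subn_gt0 (leq_ltn_trans (subset_leq_card (subsetIr _ _))) //.
  rewrite (leq_ltn_trans (leq_imset_card _ _)) // (leq_trans _ IV) //.
  by rewrite -(cardsC D) Dk addnS ltnS leq_addr.
rewrite inE => /andP[v0b v0V].
pose b' j := if j == j0 then v0 else b j.
have b'j0 : b' j0 = v0 by rewrite /b' eqxx.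
have b'D j : j \in D -> b' j = b j.
  by rewrite /b'; case: eqP => // -> jD; rewrite jD in j0D.
have [|||a [ai aV aD]] := IH (j0 |: D) b'.
- by apply/eqP; rewrite -eqSS -Dk (cardsD1 j0 (~: D)) inE j0D setCU setDE setIC.
- move=> x y; rewrite !inE => /predU1P[->|xD] /predU1P[->|yD] //;
    rewrite ?b'j0 ?b'D //.
  + by move=> e; rewrite e imset_f in v0b.
  + by move=> e; rewrite -e imset_f in v0b.
  + exact: binj.
- by move=> j; rewrite !inE => /predU1P[->|jD]; rewrite ?b'j0 ?b'D ?bV.
by exists a; split=> // j jD; rewrite aD ?b'D ?inE ?jD ?orbT.
Qed.

Lemma perm_extend (T : finType) (V : {set T}) (f : T -> T) :
  {in V &, injective f} -> exists s : {perm T}, {in V, s =1 f}.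
Proof.
move=> finj.
pose s1 := enum V ++ enum (~: V).
pose s2 := map f (enum V) ++ enum (~: f @: V).
have s1T x : x \in s1 by rewrite mem_cat !mem_enum inE orbN.
have size_s12 : size s1 = size s2.
  by rewrite !size_cat size_map -!cardE -{2}(card_in_imset finj) !cardsC.
have s2_uniq : uniq s2.
  rewrite cat_uniq map_inj_in_uniq ?enum_uniq //=; last first.
    by move=> x y; rewrite !mem_enum; apply: finj.
  rewrite andbT; apply/hasPn=> y; rewrite mem_enum inE.
  by apply: contra => /mapP[x]; rewrite mem_enum => xV ->; apply: imset_f.
pose tau x := nth x s2 (index x s1).
have tau_inj : injective tau.
  move=> x y; rewrite /tau.
  have ix : index x s1 < size s2 by rewrite -size_s12 index_mem.
  have iy : index y s1 < size s2 by rewrite -size_s12 index_mem.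
  rewrite (set_nth_default x y iy) => /eqP; rewrite nth_uniq // => /eqP e.
  by rewrite -(nth_index x (s1T x)) e nth_index.
exists (perm tau_inj) => x xV; rewrite permE /tau.
have xV' : x \in enum V by rewrite mem_enum.
by rewrite index_cat xV' nth_cat size_map index_mem xV' (nth_map x) ?index_mem ?nth_index.
Qed.

(* [values H q] is H(q); [linked H r q] holds iff {r, q} is in [Q]^{2,0}_H. *)
Definition values (A Q : finType) (H : {set {ffun Q -> A}}) (q : Q) : {set A} :=
  [set h q | h : {ffun Q -> A} in H].

Definition linked (A Q : finType) (H : {set {ffun Q -> A}}) (r q : Q) : bool :=
  [exists s : {perm A}, [forall h : {ffun Q -> A}, (h \in H) ==> (h q == s (h r))]].

Section Linked.
Variables (A Q : finType) (H : {set {ffun Q -> A}}).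

Lemma linkedP (r q : Q) :
  reflect (exists s : {perm A}, {in H, forall h : {ffun Q -> A}, h q = s (h r)}) (linked H r q).
Proof.
apply: (iffP existsP) => -[s hs]; exists s.
  by move=> h hH; apply/eqP; move/forallP/(_ h)/implyP: hs; apply.
by apply/forallP=> h; apply/implyP=> /hs ->.
Qed.

Lemma linked_sym (r q : Q) : linked H r q -> linked H q r.
Proof.
case/linkedP=> s hs; apply/linkedP; exists s^-1%g => h hH.
by rewrite hs // permK.
Qed.

Lemma linked_trans (p q r : Q) : linked H p q -> linked H q r -> linked H p r.
Proof.
case/linkedP=> s1 h1 /linkedP[s2 h2]; apply/linkedP; exists (s1 * s2)%g => h hH.
by rewrite permM -h1 ?h2.
Qed.

Lemma linked_agree (r q : Q) u v : linked H r q -> u \in H -> v \in H ->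
  u r = v r -> u q = v q.
Proof. by case/linkedP=> s hs uH vH e; rewrite !hs // e. Qed.

Lemma card_values_linked (r q : Q) : linked H r q -> #|values H q| = #|values H r|.
Proof.
case/linkedP=> s hs; suff -> : values H q = s @: values H r by rewrite card_imset //; apply: perm_inj.
apply/setP=> c; apply/imsetP/imsetP => [[h hH ->]|[_ /imsetP[h hH ->] ->]].
  by exists (h r); [apply: imset_f | apply: hs].
by exists h; rewrite ?hs.
Qed.

Lemma linked_of_same_kernel (r q : Q) :
  {in H &, forall u v : {ffun Q -> A}, (u r == v r) = (u q == v q)} -> linked H r q.
Proof.
move=> ker.
have [phi phiE] : exists phi : A -> A, forall h, h \in H -> phi (h r) = h q.
  have /fin_all_exists[phi phiP] :
      forall a, exists c, forall h, h \in H -> h r = a -> h q = c.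
    move=> a; have [/exists_inP[h0 h0H /eqP h0a]|none] := boolP [exists h in H, h r == a].
      by exists (h0 q) => h hH ha; apply/eqP; rewrite -ker // ha h0a.
    by exists a => h hH ha; case/negP: none; apply/exists_inP; exists h; rewrite ?ha.
  by exists phi => h hH; rewrite (phiP (h r) h).
have phi_inj : {in values H r &, injective phi}.
  move=> _ _ /imsetP[u uH ->] /imsetP[v vH ->]; rewrite !phiE // => /eqP.
  by rewrite -ker // => /eqP.
have [s sphi] := perm_extend phi_inj.
by apply/linkedP; exists s => h hH; rewrite sphi ?phiE //; apply: imset_f.
Qed.
End Linked.

Section Restriction.
Variables (A Q : finType) (F : opfam A) (H : {set {ffun Q -> A}}).

Lemma restrP (R : {set Q}) (f : {ffun Q -> A}) :
  reflect (exists2 h, h \in H & {in R, h =1 f}) (restr R f \in restr_set R H).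
Proof.
apply: (iffP imsetP) => -[h hH e]; exists h => //.
  by move=> x xR; move/ffunP: e => /(_ (exist _ x xR)); rewrite !ffunE.
by apply/ffunP=> -[x xR]; rewrite !ffunE /= e.
Qed.

Lemma Inv_restr (P : {set Q}) : Inv F H -> Inv F (restr_set P H).
Proof.
move=> HI m f h fF /(_ _)/imsetP hP.
have [g gH gh] := fin_all_exists2 hP.
apply/imsetP; exists [ffun q => f [ffun j => g j q]]; first exact: HI.
by apply/ffunP=> x; rewrite !ffunE; congr (f _); apply/ffunP=> j; rewrite !ffunE gh ffunE.
Qed.

Lemma Inv_decomposable (RR : {set {set Q}}) :
  {in RR, forall P, Inv F (restr_set P H)} -> decomposable H RR -> Inv F H.
Proof.
move=> HR dec m f h fF hH; apply/dec => R /HR/(_ m f (fun j => restr R (h j)) fF).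
have -> : restr R [ffun q => f [ffun j => h j q]] =
    [ffun q => f [ffun j => restr R (h j) q]].
  by apply/ffunP=> x; rewrite !ffunE; congr (f _); apply/ffunP=> j; rewrite !ffunE.
by apply=> j; apply: imset_f.
Qed.
End Restriction.

Section Representatives.
Variables (A Q : finType) (H : {set {ffun Q -> A}}) (n : nat).

Definition linked_reps : {set Q} :=
  [set q | (n <= #|values H q|) &&
     [forall p, (enum_rank p < enum_rank q)%N ==> ~~ linked H p q]].

Lemma linked_reps_unlinked (r q : Q) :
  r \in linked_reps -> q \in linked_reps -> r != q -> ~~ linked H r q.
Proof.
rewrite !inE => /andP[_ /forallP minr] /andP[_ /forallP minq] rq.
case: (ltngtP (enum_rank r) (enum_rank q)) => [lt_rq|lt_qr|/val_inj/enum_rank_inj eq_rq].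
- by have := minq r; rewrite lt_rq.
- by apply: contraNN (implyP (minr q) lt_qr); apply: linked_sym.
- by rewrite eq_rq eqxx in rq.
Qed.

Lemma linked_reps_cover (q : Q) : n <= #|values H q| -> q \notin linked_reps ->
  exists2 t, t \in linked_reps & (t != q) && linked H t q.
Proof.
move=> nq qreps; pose C := [pred t | (t == q) || linked H t q].
have [|t Ct tmin] := arg_minnP (fun t => val (enum_rank t)) (_ : C q); first by rewrite /= eqxx.
have treps : t \in linked_reps.
  rewrite inE; apply/andP; split.
    by case/orP: Ct => [/eqP -> //|/card_values_linked <-].
  apply/forallP=> p; apply/implyP=> lt_pt; apply/negP=> ptl.
  have Cp : C p.
    by rewrite /=; case/orP: Ct => [/eqP <-|tq]; rewrite ?ptl ?(linked_trans ptl tq) orbT.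
  by have := tmin p Cp; rewrite leqNgt lt_pt.
exists t => //; case/orP: Ct => [/eqP tq|->]; first by rewrite -tq treps in qreps.
by rewrite andbT; apply: contraNneq qreps => <-.
Qed.
End Representatives.

Section DeltaInterpolation.
Variables (A Q : finType) (F : opfam A) (H : {set {ffun Q -> A}}).
Hypothesis HI : Inv F H.
Variables (n : nat) (i : 'I_n).
Hypothesis Delta_i : forall a : {ffun 'I_n -> A}, #|ran a| = n ->
  forall b, b \in ran a ->
    exists2 s : op A n, s \in F n &
      s a = b /\ (forall x : {ffun 'I_n -> A}, #|ran x| < n -> s x = x i).

Lemma Delta_interpolate (S : {set Q}) (q : Q) (U : 'I_n -> {ffun Q -> A}) j :
  (forall j, U j \in H) -> injective (fun j => U j q) ->
  {in S, forall x, #|ran [ffun j => U j x]| < n} ->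
  exists2 w, w \in H & {in S, w =1 U i} /\ w q = U j q.
Proof.
move=> UH Uinj Scol.
(* Over S the columns are not injective, so s acts there as the i-th projection. *)
have Uq_ran : U j q \in ran [ffun j => U j q] by apply/imsetP; exists j; rewrite ?ffunE.
have Uq_card : #|ran [ffun j => U j q]| = n.
  by apply: card_ran_inj => x y; rewrite !ffunE; apply: Uinj.
have [s sF [sq sS]] := Delta_i Uq_card Uq_ran.
exists [ffun x => s [ffun j => U j x]]; first exact: HI.
by split=> [x xS|]; rewrite ffunE ?sq // sS ?Scol // ffunE.
Qed.

Hypothesis n_gt2 : 2 < n.

Lemma exists_injective_at (q : Q) : n <= #|values H q| ->
  exists2 U : 'I_n -> {ffun Q -> A}, forall j, U j \in H & injective (fun j => U j q).
Proof.
move=> nq; have /set0Pn[a0 _] : values H q != set0.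
  by rewrite -card_gt0 (leq_trans _ nq) // (ltn_trans _ n_gt2).
have [|||a [ainj aq _]] := @extend_inj 'I_n _ (values H q) set0 (fun=> a0) _ _ _.
- by rewrite card_ord.
- by move=> x y; rewrite inE.
- by move=> x; rewrite inE.
have /fin_all_exists2[U UH Uq] : forall j, exists2 h, h \in H & h q = a j.
  by move=> j; case/imsetP: (aq j) => h hH ->; exists h.
by exists U => // x y; rewrite !Uq => /ainj.
Qed.

Lemma three_collapse (S : {set Q}) (q : Q) (y0 y1 y2 : {ffun Q -> A}) :
  n <= #|values H q| -> y0 \in H -> y1 \in H -> y2 \in H ->
  y0 q != y1 q -> y0 q != y2 q -> y1 q != y2 q ->
  {in S, forall x, [\/ y0 x = y1 x, y0 x = y2 x | y1 x = y2 x]} ->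
  exists2 w, w \in H & {in S, w =1 y0} /\ w q = y1 q.
Proof.
move=> nq y0H y1H y2H d01 d02 d12 col.
have n3 : 2 < #|[set: 'I_n]| by rewrite cardsT card_ord.
have [j1 _ /andP[j1i _]] := exists_avoid2 i i n3.
have [j2 _ /andP[j2i j2j1]] := exists_avoid2 i j1 n3.
pose y j := if j == i then y0 else if j == j1 then y1 else y2.
have yi : y i = y0 by rewrite /y eqxx.
have yj1 : y j1 = y1 by rewrite /y (negbTE j1i) eqxx.
have yj2 : y j2 = y2 by rewrite /y (negbTE j2i) (negbTE j2j1).
pose D := [set i; j1; j2].
have iD : i \in D by rewrite !inE eqxx.
have j1D : j1 \in D by rewrite !inE eqxx orbT.
have j2D : j2 \in D by rewrite !inE eqxx !orbT.
have Dcase j : j \in D -> [\/ j = i, j = j1 | j = j2].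
  by rewrite !inE => /orP[/orP[]|] /eqP->; [exact: Or31 | exact: Or32 | exact: Or33].
have [|||a [ainj aq aD]] := @extend_inj 'I_n _ (values H q) D (fun j => y j q) _ _ _.
- by rewrite card_ord.
- move=> x x' /Dcase[]-> /Dcase[]->;
    rewrite ?yi ?yj1 ?yj2 // => /eqP;
    by rewrite ?(negbTE d01) ?(negbTE d02) ?(negbTE d12) // eq_sym
               ?(negbTE d01) ?(negbTE d02) ?(negbTE d12).
- by move=> j _; apply: imset_f; rewrite /y; do 2 case: ifP => _ //.
have /fin_all_exists2[Z ZH Zq] : forall j, exists2 h, h \in H & h q = a j.
  by move=> j; case/imsetP: (aq j) => h hH ->; exists h.
pose U j := if j \in D then y j else Z j.
have UD j : j \in D -> U j = y j by rewrite /U => ->.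
have UH j : U j \in H by rewrite /U /y; do 3 case: ifP => _ //.
have Uq j : U j q = a j by rewrite /U; case: ifP => [/aD|_].
have Uinj : injective (fun j => U j q) by move=> x x'; rewrite /= !Uq => /ainj.
have Ucol : {in S, forall x, #|ran [ffun j => U j x]| < n}.
  move=> x /col[] e.
  - by apply: (@card_ran_lt _ _ _ i j1); rewrite 1?eq_sym // !ffunE !UD // yi yj1.
  - by apply: (@card_ran_lt _ _ _ i j2); rewrite 1?eq_sym // !ffunE !UD // yi yj2.
  - by apply: (@card_ran_lt _ _ _ j1 j2); rewrite 1?eq_sym // !ffunE !UD // yj1 yj2.
have [w wH [wS wq]] := Delta_interpolate j1 UH Uinj Ucol.
by exists w => //; split=> [x xS|]; [rewrite wS // UD // yi | rewrite wq UD // yj1].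
Qed.

Lemma modify_at_split (S : {set Q}) (q : Q) (u v h : {ffun Q -> A}) c :
  n <= #|values H q| -> u \in H -> v \in H -> {in S, u =1 v} -> u q != v q ->
  h \in H -> c \in values H q ->
  exists2 w, w \in H & {in S, w =1 h} /\ w q = c.
Proof.
move=> nq uH vH uv nuv hH cq.
have from_u d : d \in values H q -> exists2 w, w \in H & {in S, w =1 u} /\ w q = d.
  case/imsetP=> z zH ->.
  have [<-|nuz] := eqVneq (u q) (z q); first by exists u.
  have [<-|nvz] := eqVneq (v q) (z q); first by exists v => //; split=> // x /uv.
  have col : {in S, forall x, [\/ v x = z x, v x = u x | z x = u x]}.
    by move=> x /uv ->; apply: Or32.
  have [||w wH [wv wq]] := three_collapse nq vH zH uH nvz _ _ col; rewrite 1?eq_sym //.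
  by exists w => //; split=> // x xS; rewrite wv // uv.
have [<-|nhc] := eqVneq (h q) c; first by exists h.
have [e eV /andP[eh ec]] := exists_avoid2 (h q) c (leq_trans n_gt2 nq).
have [w1 w1H [w1u w1q]] := from_u c cq.
have [w2 w2H [w2u w2q]] := from_u e eV.
have col : {in S, forall x, [\/ h x = w1 x, h x = w2 x | w1 x = w2 x]}.
  by move=> x xS; apply: Or33; rewrite w1u ?w2u.
have [|||w wH [wh wq]] := three_collapse nq hH w1H w2H _ _ _ col.
- by rewrite w1q.
- by rewrite w2q eq_sym.
- by rewrite w1q w2q eq_sym.
by exists w => //; rewrite wq.
Qed.

Lemma realize_unlinked_pair (r q : Q) a c :
  n <= #|values H r| -> n <= #|values H q| -> ~~ linked H r q ->
  a \in values H r -> c \in values H q ->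
  exists2 h, h \in H & h r = a /\ h q = c.
Proof.
move=> nr nq nl ar cq.
have from_split p p' b b' : n <= #|values H p'| ->
    b \in values H p -> b' \in values H p' ->
    [exists u in H, exists v in H, (u p == v p) && (u p' != v p')] ->
    exists2 h, h \in H & h p = b /\ h p' = b'.
  move=> np' /imsetP[h0 h0H ->] b'p'.
  case/exists_inP=> u uH /exists_inP[v vH /andP[/eqP e ne]].
  have [|w wH [wh0 wp']] := modify_at_split (S := [set p]) np' uH vH _ ne h0H b'p'.
    by move=> x /set1P ->.
  by exists w => //; rewrite wh0 ?set11.
have [split_q|N1] := boolP [exists u in H, exists v in H, (u r == v r) && (u q != v q)].
  exact: from_split.
have [split_r|N2] := boolP [exists u in H, exists v in H, (u q == v q) && (u r != v r)].
  by have [h hH [hq hr]] := from_split q r c a nr cq ar split_r; exists h.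
case/negP: nl; apply: linked_of_same_kernel => u v uH vH.
apply/idP/idP => /eqP e.
  apply: contraNT N1 => ne; apply/exists_inP; exists u => //.
  by apply/exists_inP; exists v; rewrite ?e ?eqxx.
apply: contraNT N2 => ne; apply/exists_inP; exists u => //.
by apply/exists_inP; exists v; rewrite ?e ?eqxx.
Qed.

Lemma separate_from_small (X : {set Q}) (q : Q) :
  {in X, forall x, #|values H x| < n} -> n <= #|values H q| ->
  exists u v, [/\ u \in H, v \in H, {in X, u =1 v} & u q != v q].
Proof.
move=> Xsmall nq; have [U UH Uinj] := exists_injective_at nq.
have n3 : 2 < #|[set: 'I_n]| by rewrite cardsT card_ord.
have [j _ /andP[ji _]] := exists_avoid2 i i n3.
have Ucol : {in X, forall x, #|ran [ffun j => U j x]| < n}.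
  move=> x xX; apply: leq_ltn_trans (Xsmall x xX); apply: subset_leq_card.
  by apply/subsetP=> _ /imsetP[k _ ->]; rewrite ffunE; apply: imset_f.
have [w wH [wU wq]] := Delta_interpolate j UH Uinj Ucol.
exists (U i), w; split=> // [x xX|]; first by rewrite wU.
by rewrite wq; apply: contra ji => /eqP/Uinj ->.
Qed.

Lemma separate_by_unlinked (S : {set Q}) (q r : Q) (h y : {ffun Q -> A}) :
  n <= #|values H q| -> n <= #|values H r| -> ~~ linked H r q ->
  h \in H -> y \in H -> {in S :\ r, y =1 h} -> y q != h q ->
  exists u v, [/\ u \in H, v \in H, {in S, u =1 v} & u q != v q].
Proof.
move=> nq nr nl hH yH yh nyh.
have [c cq /andP[ch cy]] := exists_avoid2 (h q) (y q) (leq_trans n_gt2 nq).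
have [z zH [zr zq]] := realize_unlinked_pair nr nq nl (imset_f _ hH) cq.
have col : {in S, forall x, [\/ h x = y x, h x = z x | y x = z x]}.
  move=> x xS; have [->|xr] := eqVneq x r; first by apply: Or32.
  by apply: Or31; rewrite yh // !inE xr.
have [|||w wH [wh wq]] := three_collapse nq hH yH zH _ _ _ col.
- by rewrite eq_sym.
- by rewrite zq eq_sym.
- by rewrite zq eq_sym.
exists h, w; split=> // [x xS|]; first by rewrite wh.
by rewrite wq eq_sym.
Qed.

Lemma interpolate_unlinked (X T : {set Q}) (g : {ffun Q -> A}) :
  {in X, forall x, #|values H x| < n} ->
  {in T, forall r, n <= #|values H r|} ->
  {in T &, forall r q, r != q -> ~~ linked H r q} ->
  (exists2 h, h \in H & {in X, h =1 g}) ->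
  {in T, forall r, g r \in values H r} ->
  exists2 h, h \in H & {in X :|: T, h =1 g}.
Proof.
move=> Xsmall; move Tk: #|T| => k.
elim: k T Tk g => [|k IH] T Tk g Tbig Tunl gX gT.
  by move/eqP: Tk; rewrite cards_eq0 => /eqP ->; rewrite setU0.
have IHsub (T' : {set Q}) (g' : {ffun Q -> A}) : T' \subset T -> #|T'| = k ->
    (exists2 h, h \in H & {in X, h =1 g'}) -> {in T', forall r, g' r \in values H r} ->
    exists2 h, h \in H & {in X :|: T', h =1 g'}.
  move=> /subsetP sT' T'k; apply: IH => // [r /sT'/Tbig // | r r' /sT' rT /sT' r'T].
  exact: Tunl.
have [q qT] : exists q, q \in T by apply/set0Pn; rewrite -card_gt0 Tk.
have cardTD1 r : r \in T -> #|T :\ r| = k.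
  by move=> rT; apply/eqP; rewrite -eqSS -Tk (cardsD1 r T) rT.
have nq := Tbig q qT.
have qX : q \notin X by apply: contraL nq => /Xsmall; rewrite -ltnNge.
have [u [v [uH vH uv nuv]]] :
    exists u v, [/\ u \in H, v \in H, {in X :|: T :\ q, u =1 v} & u q != v q].
  have [->|[r]] := set_0Vmem (T :\ q); first by rewrite setU0; apply: separate_from_small.
  (* Move h at q keeping X :|: T :\ r by induction, then repair r by an unlinked pair. *)
  rewrite !inE => /andP[rq rT]; have [h hH _] := gX.
  have [c cq /andP[ch _]] := exists_avoid2 (h q) (h q) (leq_trans n_gt2 nq).
  pose g1 := [ffun x => if x == q then c else h x].
  have [||y yH yg1] := IHsub (T :\ r) g1 (subsetDl _ _) (cardTD1 r rT) _ _.
  - by exists h => // x xX; rewrite ffunE ifN //; apply: contraNneq qX => <-.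
  - by move=> x; rewrite inE ffunE => /andP[_ xT]; case: eqP => [-> //|_]; apply: imset_f.
  apply: (separate_by_unlinked nq (Tbig r rT) (Tunl r q rT qT rq) hH yH).
  - move=> x; rewrite !inE => /andP[xr /orP[xX|/andP[xq xT]]].
      by rewrite yg1 ?inE ?xX // ffunE ifN //; apply: contraNneq qX => <-.
    by rewrite yg1 ?inE ?xr ?xT ?orbT // ffunE ifN.
  - by rewrite yg1 ?ffunE ?eqxx // !inE eq_sym rq qT orbT.
have [|h0 h0H h0g] := IHsub (T :\ q) g (subsetDl _ _) (cardTD1 q qT) gX _.
  by move=> r; rewrite inE => /andP[_ /gT].
have [w wH [wh0 wq]] := modify_at_split nq uH vH uv nuv h0H (gT q qT).
exists w => // x; have [-> //|xq] := eqVneq x q.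
move=> xXT; have xS : x \in X :|: T :\ q by move: xXT; rewrite !inE xq.
by rewrite wh0 // h0g.
Qed.

Lemma decomp_family_decomposable : decomposable H (decomp_family H n).
Proof.
move=> f; split=> [fH R _|fR]; first exact: imset_f.
have fq q : f q \in values H q.
  have /fR/restrP[h hH hf] : [set q] \in decomp_family H n by rewrite !inE cards1 eqxx.
  by rewrite -hf ?set11 //; apply: imset_f.
have [h hH hf] : exists2 h, h \in H & {in Qn H n :|: linked_reps H n, h =1 f}.
  apply: interpolate_unlinked => //.
  - by move=> x; rewrite inE.
  - by move=> r; rewrite inE => /andP[].
  - exact: linked_reps_unlinked.
  - by apply/restrP/fR; rewrite !inE eqxx orbT.
suff -> : f = h by [].
apply/ffunP=> x; have [/hf -> //|] := boolP (x \in Qn H n :|: linked_reps H n).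
rewrite inE negb_or inE -leqNgt => /andP[nx xreps].
have [t treps /andP[tx tx_linked]] := linked_reps_cover nx xreps.
have /fR/restrP[h' h'H h'f] : [set t; x] \in decomp_family H n.
  rewrite !inE; apply/orP; left; apply/orP; right.
  by apply/existsP; exists t; apply/existsP; exists x; rewrite tx eqxx.
rewrite -h'f ?set22 //; apply: linked_agree tx_linked h'H hH _.
by rewrite h'f ?set21 // hf // inE treps orbT.
Qed.
End DeltaInterpolation.

Theorem theorem2 (A Q : finType) (H : {set {ffun Q -> A}}) (n : nat)
  (F : opfam A) :
  0 < #|A| -> 0 < #|Q| -> H != set0 -> 3 <= n ->
  is_clone F -> Delta_s F n ->
  (Inv F H <->
   ((forall P, P \in decomp_family H n -> Inv F (restr_set P H)) /\
    decomposable H (decomp_family H n))).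
Proof.
move=> _ _ _ n_gt2 _ [i Delta_i].
split=> [HI|[HR dec]]; last exact: Inv_decomposable HR dec.
split=> [P _|]; first exact: Inv_restr.
exact: (decomp_family_decomposable HI Delta_i n_gt2).
Qed.
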